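(* Let $C$ be a convex subset of a real separable Banach space $X$, and let $A,B$ be faces of $C$ with $\overline{A}\neq\overline{B}$. Then $\operatorname{fri} A\cap\operatorname{fri} B=\emptyset$.
   Context: For a convex set $C$, a convex subset $F\subseteq C$ is a face of $C$ if for every $x\in F$ and all $y,z\in C$ with $x\in(y,z)=\{(1-t)y+tz:t\in(0,1)\}$ we have $y,z\in F$; $F_{\min}(x,C)$ is the intersection of all faces of $C$ containing $x\in C$. The face relative interior of a convex set $D$ is $\operatorname{fri} D=\{x\in D: D\subseteq\overline{F_{\min}(x,D)}\}$. *)

From HB Require Import structures.
From mathcomp Require Import all_boot all_order all_algebra.
From mathcomp Require Import all_classical all_reals all_analysis.
Set Implicit Arguments. Unset Strict Implicit. Unset Printing Implicit Defensive.
Import Order.TTheory GRing.Theory Num.Theory.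
Import numFieldNormedType.Exports.
Local Open Scope classical_set_scope.
Local Open Scope ring_scope.

Definition separable_space (T : topologicalType) : Prop :=
  exists D : set T, countable D /\ dense D.

Section ConvexFaces.
Variables (R : realType) (X : lmodType R).

Definition convex (C : set X) : Prop :=
  forall y z (t : R), C y -> C z -> 0 <= t -> t <= 1 ->
    C ((1 - t) *: y + t *: z).

Definition is_face (C F : set X) : Prop :=
  [/\ F `<=` C, convex F &
   forall x y z, F x -> C y -> C z ->
     (exists t : R, [/\ 0 < t, t < 1 & x = (1 - t) *: y + t *: z]) ->
     F y /\ F z].

Definition Fmin (x : X) (C : set X) : set X :=
  \bigcap_(F in [set F | is_face C F /\ F x]) F.

End ConvexFaces.

Definition fri (R : realType) (X : normedModType R) (D : set X) : set X :=
  [set x | D x /\ D `<=` closure (Fmin x D)].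

From HB Require Import structures.
From mathcomp Require Import all_boot all_order all_algebra.
From mathcomp Require Import all_classical all_reals all_analysis.
Import numFieldNormedType.Exports.
Set Implicit Arguments. Unset Strict Implicit.
Local Open Scope classical_set_scope.

(* Suppose x lies in fri A and in fri B.  Since B is a face of C
   and A is a convex subset of C, the set A ∩ B is a face of A; it contains x,
   so the minimal face F_min(x, A) is contained in A ∩ B ⊆ B.  As x ∈ fri A,
   A ⊆ closure F_min(x, A) ⊆ closure B, hence closure A ⊆ closure B.  By
   symmetry closure B ⊆ closure A, contradicting closure A ≠ closure B.

   It then proves, in a normed space, that a
   point of fri A lying in a face F of A forces closure A ⊆ closure F. *)

Section FaceGeometry.
Variables (R : realType) (X : lmodType R).

Lemma convexI (A B : set X) : convex A -> convex B -> convex (A `&` B).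
Proof.
move=> cA cB y z t [Ay By] [Az Bz] t0 t1.
by split; [exact: cA | exact: cB].
Qed.

(* If A and B are faces of C, then A ∩ B is a face of A: an open segment of A
   through a point of A ∩ B is a segment of C through a point of the face B. *)
Lemma face_setI (C A B : set X) :
  is_face C A -> is_face C B -> is_face A (A `&` B).
Proof.
move=> [AC cA _] [_ cB fB]; split; first by move=> ? [].
- exact: convexI.
- move=> x y z [_ Bx] Ay Az seg.
  have [By Bz] := fB x y z Bx (AC _ Ay) (AC _ Az) seg.
  by split.
Qed.

Lemma Fmin_sub_face (D F : set X) (x : X) :
  is_face D F -> F x -> Fmin x D `<=` F.
Proof. by move=> faceF Fx y; apply; split. Qed.

End FaceGeometry.

(* A point of fri A lying in a face F of A forces closure A ⊆ closure F:
   A ⊆ closure F_min(x, A) ⊆ closure F, and closure F is closed. *)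
Lemma fri_closure_sub_face (R : realType) (X : normedModType R)
    (A F : set X) (x : X) :
  fri A x -> is_face A F -> F x -> closure A `<=` closure F.
Proof.
move=> [_ AsubFmin] faceF Fx.
have A_sub : A `<=` closure F.
  by move=> a /AsubFmin; apply: closureS; exact: Fmin_sub_face.
by rewrite closureE; apply: smallest_sub => //; exact: closed_closure.
Qed.

Lemma fri_face_closure_sub (R : realType) (X : normedModType R)
    (C A B : set X) (x : X) :
  is_face C A -> is_face C B -> fri A x -> fri B x ->
  closure A `<=` closure B.
Proof.
move=> faceA faceB friAx [Bx _].
have Ax : A x by case: friAx.
have sub_AB : closure A `<=` closure (A `&` B).
  by apply: (fri_closure_sub_face friAx (face_setI faceA faceB)).
by move=> y /sub_AB; apply: closureS => ? [].
Qed.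

Theorem proposition5p2 (R : realType) (X : completeNormedModType R)
  (C A B : set X) :
  separable_space X ->
  convex C -> is_face C A -> is_face C B ->
  closure A <> closure B ->
  fri A `&` fri B = set0.
Proof.
move=> _ _ faceA faceB neqAB; apply/seteqP; split => // x [friAx friBx].
apply: neqAB; apply/seteqP; split.
- exact: (fri_face_closure_sub faceA faceB friAx friBx).
- exact: (fri_face_closure_sub faceB faceA friBx friAx).
Qed.
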